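(* For any $\alpha<1/2$ there exist constants $0<c\le C<\infty$ such that for all $n\ge1$, \[c\,n^{-1/2}\le \mathbb{P}\big(Z_i\ge i^\alpha\ \forall i=1,\ldots,n\big)\le C\,n^{-1/2}.\]
   Context: $X_1,X_2,\ldots$ are i.i.d. with $\mathbb{P}(X_i=1)=\mathbb{P}(X_i=-1)=1/2$ and $Z_i=\sum_{k=1}^i\prod_{j=1}^kX_j$. *)

From HB Require Import structures.
From mathcomp Require Import all_boot all_order all_algebra.
From mathcomp Require Import all_classical all_reals all_analysis.
Set Implicit Arguments. Unset Strict Implicit. Unset Printing Implicit Defensive.
Import Order.TTheory GRing.Theory Num.Theory.
Local Open Scope ring_scope.

(* A realisation of the first n signs: x is an n-tuple of booleans,
   X_k = 1 if the (k-1)-th entry is true, -1 otherwise (k = 1..n). *)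
Definition Xsign (R : realType) (n : nat) (x : n.-tuple bool) (k : nat) : R :=
  if nth false x k.-1 then 1 else -1.

Definition Zsum (R : realType) (n : nat) (x : n.-tuple bool) (i : nat) : R :=
  \sum_(1 <= k < i.+1) \prod_(1 <= j < k.+1) Xsign R x j.

Definition good_event (R : realType) (alpha : R) (n : nat) (x : n.-tuple bool) : bool :=
  [forall i : 'I_n, ((i.+1)%:R `^ alpha <= Zsum R x i.+1)].

Definition prob_good (R : realType) (alpha : R) (n : nat) : R :=
  #|[set x : n.-tuple bool | good_event alpha x]|%:R / 2 ^+ n.

(* Since Y_k = X_1 ... X_k is +-1 whatever X_1, ..., X_(k-1) are, the Y_k are
   again i.i.d. fair signs and Z is a simple random walk; the event is its
   survival above the barrier i^alpha, i.e. the total mass of the walk killed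
   below the barrier.

   Upper bound: lowering the barrier to 0 only helps, and by the reflection
   principle the walk from 1 survives k steps with probability at most
   2 'C(k, k/2) / 2^k = O(k^-1/2).

   Lower bound: we may take 1/4 <= alpha < 1/2.  With probability 2^-m the
   walk goes straight up to height m = 2^j0 at time m.  From there, while the
   barrier stays below a level L, x - L is a submartingale of the killed walk.
   On the dyadic block of times [2^j, 2^(j+1)] the barrier is below rho^(j+1),
   rho = 2^alpha, and raising L between blocks costs rho^(j+2) times the
   surviving mass, which is O(m 2^(-j/2)).  As rho < sqrt 2, the initial level
   and these costs are o(m) as j0 grows, so the first moment E of the killed
   walk at time n is at least m/2.  Its second moment grows by at most the
   surviving mass A per step, hence is O(m^2 + m sqrt n), and AM-GM,
   E <= F / (2t) + t A / 2, yields A >= c / sqrt n. *)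

From HB Require Import structures.
From mathcomp Require Import all_boot all_order all_algebra.
From mathcomp Require Import all_classical all_reals all_analysis.
From mathcomp Require Import zify ring lra.
Set Implicit Arguments. Unset Strict Implicit. Unset Printing Implicit Defensive.
Import Order.TTheory GRing.Theory Num.Theory.

Lemma leq_binS k j : 2 * j < k -> 'C(k, j) <= 'C(k, j.+1).
Proof.
move=> lt_2j_k; rewrite -(leq_pmul2l (ltn0Sn j)) mul_bin_left leq_mul2r.
by apply/orP; right; lia.
Qed.

Lemma leq_bin_half k j : 'C(k, j) <= 'C(k, k./2).
Proof.
wlog le_j_half : j / j <= k./2.
  move=> W; case: (leqP j k./2) => [/W//|lt_half_j].
  case: (leqP j k) => [le_jk|/bin_small->//].
  by rewrite -bin_sub //; apply: W; lia.
have grow d : d + j <= k./2 -> 'C(k, j) <= 'C(k, d + j).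
  elim: d => [//|d IH] le_dj; apply: leq_trans (IH _) (leq_binS _); lia.
by rewrite -(subnK le_j_half); apply: grow; rewrite subnK.
Qed.

Lemma mul_bin_central m : 'C(m.+1.*2, m.+1) * m.+1 = 2 * m.*2.+1 * 'C(m.*2, m).
Proof.
have sym : 'C(m.*2.+1, m.+1) = 'C(m.*2.+1, m).
  by rewrite -bin_sub; [congr 'C(_, _) | ]; lia.
have e1 := mul_bin_diag m.*2.+2 m; rewrite /= in e1.
have e2 := mul_bin_diag m.*2.+1 m; rewrite /= sym in e2.
have binS_central : 'C(m.*2.+2, m.+1) = 2 * 'C(m.*2.+1, m).
  by apply/eqP; rewrite -(eqn_pmul2l (ltn0Sn m)) -e1; apply/eqP; lia.
by rewrite doubleS binS_central; nia.
Qed.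

Lemma bin_central_sq m : 'C(m.*2, m) ^ 2 * m.+1 <= 16 ^ m.
Proof.
elim: m => [//|m IH].
rewrite -(@leq_pmul2r (m.+1 ^ 2)) ?expn_gt0 //.
have -> : 'C(m.+1.*2, m.+1) ^ 2 * m.+2 * m.+1 ^ 2
          = 'C(m.*2, m) ^ 2 * (4 * m.*2.+1 ^ 2 * m.+2).
  by rewrite -mulnA mulnCA -expnMn mul_bin_central; ring.
have key : 4 * m.*2.+1 ^ 2 * m.+2 <= 16 * m.+1 ^ 3 by rewrite -mul2n; nia.
apply: (leq_trans (leq_mul (leqnn _) key)).
have -> : 'C(m.*2, m) ^ 2 * (16 * m.+1 ^ 3) = 16 * m.+1 ^ 2 * ('C(m.*2, m) ^ 2 * m.+1).
  by ring.
by rewrite (expnS 16) [X in _ <= X]mulnAC leq_mul2l IH orbT.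
Qed.

Lemma bin_sq_le k j : 'C(k, j) ^ 2 * k.+1 <= 2 * 4 ^ k.
Proof.
apply: (@leq_trans ('C(k, k./2) ^ 2 * k.+1)).
  by rewrite leq_mul2r leq_exp2r // leq_bin_half orbT.
have [m [->|->]] : exists m, k = m.*2 \/ k = m.*2.+1 by exists k./2; lia.
- rewrite doubleK -mul2n expnM (@leq_trans (2 * ('C(m.*2, m) ^ 2 * m.+1))) //.
    by rewrite -mul2n; nia.
  by rewrite leq_mul2l bin_central_sq.
- have -> : (m.*2.+1)./2 = m by lia.
  have le_bin : 'C(m.*2.+1, m) <= 2 * 'C(m.*2, m).
    rewrite -bin_sub; last lia.
    have -> : m.*2.+1 - m = m.+1 by lia.
    by rewrite binS; have := leq_bin_half m.*2 m.+1; rewrite doubleK; lia.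
  have sq_le : 'C(m.*2.+1, m) ^ 2 <= 4 * 'C(m.*2, m) ^ 2.
    have -> : 4 * 'C(m.*2, m) ^ 2 = (2 * 'C(m.*2, m)) ^ 2 by ring.
    by rewrite leq_exp2r.
  have -> : 4 ^ m.*2.+1 = 4 * 16 ^ m by rewrite expnS -mul2n expnM.
  have := bin_central_sq m; nia.
Qed.

(* By the reflection principle, [nsurv k x] is the number of +-1 paths of
   length k from x that never visit 0: if j steps go down, the endpoint
   x + k - 2j must lie in [1, 2x]. *)
Definition in_window k x j : bool := (k <= x + 2 * j) && (2 * j < k + x).
Definition nsurv k x := \sum_(j < k.+1) 'C(k, j) * in_window k x j.

Lemma nsurvn0 k : nsurv k 0 = 0.
Proof.
apply: big1 => j _; have -> : in_window k 0 j = false by rewrite /in_window; lia.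
by rewrite muln0.
Qed.

Lemma nsurv0n x : nsurv 0 x = (0 < x).
Proof. by rewrite /nsurv big_ord1 /in_window; case: x. Qed.

Lemma nsurvS k x : 0 < x -> nsurv k.+1 x = nsurv k x.-1 + nsurv k x.+1.
Proof.
move=> x_gt0; set w := in_window k.+1 x.
have drop_last (F : nat -> nat) :
    \sum_(j < k.+2) 'C(k, j) * F j = \sum_(j < k.+1) 'C(k, j) * F j.
  by rewrite big_ord_recr /= bin_small // mul0n addn0.
have -> : nsurv k.+1 x = \sum_(j < k.+1) 'C(k, j) * (w j + w j.+1).
  rewrite /nsurv -/w big_ord_recl.
  under eq_bigr => j _ do rewrite lift0 binS mulnDl.
  rewrite big_split /= addnA.
  have <- : \sum_(j < k.+2) 'C(k, j) * w j
            = 'C(k.+1, 0) * w 0 + \sum_(j < k.+1) 'C(k, j.+1) * w j.+1.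
    by rewrite big_ord_recl !bin0.
  rewrite (drop_last (fun j => w j)) -big_split.
  by apply: eq_bigr => j _; rewrite mulnDr.
rewrite /nsurv -big_split /=; apply: eq_bigr => j _.
by rewrite -mulnDr /w /in_window; congr (_ * _); lia.
Qed.

Lemma sum_bin_double_eq k c : \sum_(j < k.+1) 'C(k, j) * (2 * j == c) <= 'C(k, k./2).
Proof.
apply: (@leq_trans (\sum_(j < k.+1 | j == c./2 :> nat) 'C(k, j))).
  rewrite [X in _ <= X]big_mkcond /=; apply: leq_sum => j _.
  by case: eqP => [<-|_]; rewrite ?muln0 // mul2n doubleK eqxx muln1.
by rewrite big_ord1_eq; case: ifP => // _; apply: leq_bin_half.
Qed.

Lemma nsurv_le k x : nsurv k x <= 2 * x * 'C(k, k./2).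
Proof.
elim: x => [|x IH]; first by rewrite nsurvn0.
have edges : nsurv k x.+1 <= nsurv k x + \sum_(j < k.+1) 'C(k, j) * (2 * j == k + x)
                                       + \sum_(j < k.+1) 'C(k, j) * (2 * j == k - x.+1).
  rewrite /nsurv -!big_split /=; apply: leq_sum => j _.
  by rewrite -!mulnDr leq_mul2l /in_window; apply/orP; right; lia.
apply: (leq_trans edges).
by have := sum_bin_double_eq k (k + x); have := sum_bin_double_eq k (k - x.+1); lia.
Qed.

Local Open Scope ring_scope.

Section Tuples.
Variables (T : finType) (n : nat).

Definition rcons_pair (p : n.-tuple T * T) : n.+1.-tuple T := [tuple of rcons p.1 p.2].

Lemma rcons_pair_bij : bijective rcons_pair.
Proof.
exists (fun t => ([tuple of belast (thead t) (behead t)], last (thead t) (behead t))).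
- move=> [s b]; rewrite /rcons_pair /=.
  have := lastI (thead [tuple of rcons s b]) (behead [tuple of rcons s b]).
  rewrite -[_ :: _]/(val [tuple of _ :: _]) -tuple_eta /= => /rcons_inj[eq_s eq_b].
  by congr pair; [apply: val_inj; rewrite /= -eq_s | rewrite -eq_b].
- by move=> t; apply: val_inj; rewrite /= -lastI [in RHS](tuple_eta t).
Qed.

Lemma big_tuple_rcons (V : nmodType) (F : n.+1.-tuple T -> V) :
  \sum_(t : n.+1.-tuple T) F t = \sum_(t : n.-tuple T) \sum_(b : T) F (rcons_pair (t, b)).
Proof.
rewrite (reindex rcons_pair) /=; last exact/onW_bij/rcons_pair_bij.
by rewrite pair_big /=; apply: eq_bigr => -[].
Qed.

End Tuples.

Section SignSequences.
Variable R : realType.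
Implicit Types (s : seq bool) (b : bool).

Definition sign b : R := if b then 1 else -1.
Definition seqY s k : R := \prod_(1 <= j < k.+1) sign (nth false s j.-1).
Definition seqZ s i : R := \sum_(1 <= k < i.+1) seqY s k.

Lemma ZsumE n (t : n.-tuple bool) i : Zsum R t i = seqZ t i.
Proof. by []. Qed.

Lemma seqY_rcons s b k : (k <= size s)%N -> seqY (rcons s b) k = seqY s k.
Proof.
move=> le_ks; apply: eq_big_nat => j /andP[j_gt0 lt_jk].
by rewrite nth_rcons (_ : j.-1 < size s)%N //; lia.
Qed.

Lemma seqZ_rcons s b i : (i <= size s)%N -> seqZ (rcons s b) i = seqZ s i.
Proof. by move=> le_is; apply: eq_big_nat => k /andP[_ ?]; apply: seqY_rcons; lia. Qed.

Lemma seqZ_rcons_last s b n : size s = n ->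
  seqZ (rcons s b) n.+1 = seqZ s n + seqY s n * sign b.
Proof.
move=> <-; rewrite /seqZ big_nat_recr //= -/(seqZ _ _) seqZ_rcons //; congr (_ + _).
by rewrite /seqY big_nat_recr //= -/(seqY _ _) seqY_rcons // nth_rcons ltnn eqxx.
Qed.

Lemma seqY_sign s k : seqY s k = 1 \/ seqY s k = -1.
Proof.
elim: k => [|k IH]; first by left; rewrite /seqY big_geq.
rewrite /seqY big_nat_recr //= -/(seqY _ _) /sign.
by case: IH => ->; case: nth; rewrite ?mulr1 ?mulrN1 ?opprK; auto.
Qed.

Lemma sum_sign_step (g : bool) (Z Y L v : R) : Y = 1 \/ Y = -1 ->
  \sum_(b : bool) ((g && (L <= Z + Y * sign b)%R) && (Z + Y * sign b == v))%:R
  = (L <= v)%R%:R * ((g && (Z == v - 1))%:R + (g && (Z == v + 1))%:R) :> R.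
Proof.
have at_v w : ((g && (L <= w)%R) && (w == v))%:R = (L <= v)%R%:R * (g && (w == v))%:R :> R.
  by case: eqP => [->|_]; rewrite ?andbF ?mulr0 // !andbT -natrM mulnb andbC.
have shift (e : R) : (Z + e == v) = (Z == v - e) by rewrite [RHS]eq_sym subr_eq eq_sym.
move=> Y_sign; rewrite big_bool /= !at_v -mulrDr /sign !mulr1 !mulrN1 !shift.
by case: Y_sign => ->; rewrite ?opprK //; congr (_ * _); apply: addrC.
Qed.

End SignSequences.

Section KilledWalk.
Variable R : realType.
Implicit Types (alive : nat -> nat -> bool) (mu nu : nat -> R) (f : nat -> R).

(* [mu] is a mass distribution on the heights at time [i]; one step of the
   simple random walk moves it to time [i.+1], where the mass landing outside
   [alive i.+1] (or below 0) is killed. *)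
Definition killed_step alive i mu : nat -> R := fun x =>
  if alive i.+1 x then ((if x is y.+1 then mu y else 0) + mu x.+1) / 2 else 0.

Fixpoint killed_walk alive i0 mu k : nat -> R :=
  if k is k'.+1 then killed_step alive (i0 + k') (killed_walk alive i0 mu k') else mu.

Definition dual_step alive i f (x : nat) : R :=
  ((if alive i.+1 x.+1 then f x.+1 else 0) +
   (if x is y.+1 then (if alive i.+1 y then f y else 0) else 0)) / 2.

Lemma sum_killed_step_mul alive i nu f N : (forall x, (N <= x)%N -> nu x = 0) ->
  \sum_(y < N.+1) killed_step alive i nu y * f y = \sum_(x < N.+1) nu x * dual_step alive i f x.
Proof.
move=> nu_supp; pose g y : R := if alive i.+1 y then f y else 0.
pose down (y : nat) : R := if y is z.+1 then nu z * g y else 0.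
pose up (x : nat) : R := if x is y.+1 then nu x * g y else 0.
transitivity (\sum_(y < N.+1) (down y / 2 + nu y.+1 * g y / 2)).
  apply: eq_bigr => -[[|y] ?] _; rewrite /killed_step /down /g /=.
    by case: ifP => _; rewrite ?mulr0 ?mul0r ?addr0 //; field.
  by case: ifP => _; rewrite ?mulr0 ?mul0r ?addr0 //; field.
transitivity (\sum_(x < N.+1) (nu x * g x.+1 / 2 + up x / 2)); last first.
  by apply: eq_bigr => -[[|x] ?] _; rewrite /dual_step /up /g /= ?addr0 ?mulr0 ?mul0r; field.
rewrite !big_split /=; congr (_ + _).
- rewrite big_ord_recl big_ord_recr /= mul0r add0r (nu_supp N) // !mul0r addr0.
  by apply: eq_bigr => x _; rewrite /bump /=.
- rewrite big_ord_recr big_ord_recl /= (nu_supp N.+1) // !mul0r addr0 add0r.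
  by apply: eq_bigr => x _; rewrite /bump /=.
Qed.

Lemma killed_walkD alive i0 mu a b :
  killed_walk alive i0 mu (a + b) = killed_walk alive (i0 + a) (killed_walk alive i0 mu a) b.
Proof. by elim: b => [|b IH]; rewrite ?addn0 //= addnS /= IH addnA. Qed.

Lemma eq_killed_walk alive i0 mu mu' : mu =1 mu' ->
  forall k, killed_walk alive i0 mu k =1 killed_walk alive i0 mu' k.
Proof.
move=> eq_mu; elim=> [|k IH] x //=; rewrite /killed_step; case: ifP => // _.
by case: x => [|y]; rewrite !IH.
Qed.

Lemma killed_walk_ge0 alive i0 mu : (forall x, 0 <= mu x) ->
  forall k x, 0 <= killed_walk alive i0 mu k x.
Proof.
move=> mu_ge0; elim=> [|k IH] x //=; rewrite /killed_step; case: ifP => // _.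
by apply: divr_ge0 => //; apply: addr_ge0 => //; case: x.
Qed.

Lemma killed_walk_le alive alive' i0 mu mu' :
    (forall i x, alive i.+1 x -> alive' i.+1 x) ->
    (forall x, 0 <= mu x) -> (forall x, mu x <= mu' x) ->
  forall k x, killed_walk alive i0 mu k x <= killed_walk alive' i0 mu' k x.
Proof.
move=> sub_alive mu_ge0 le_mu; have mu'_ge0 x : 0 <= mu' x by apply: le_trans (le_mu x).
elim=> [|k IH] x //=; rewrite /killed_step.
have ge0 := killed_walk_ge0 alive' i0 mu'_ge0 k.
case: ifP => [/sub_alive->|_]; last first.
  by case: ifP => // _; apply: divr_ge0 => //; apply: addr_ge0 => //; case: x.
rewrite ler_pM2r ?invr_gt0 ?ltr0n // lerD ?IH //; case: x => [|y] //; exact: IH.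
Qed.

Lemma killed_walkZ alive i0 mu (c : R) k x :
  killed_walk alive i0 (fun y => c * mu y) k x = c * killed_walk alive i0 mu k x.
Proof.
elim: k x => [|k IH] x //=; rewrite /killed_step; case: ifP => _; last by rewrite mulr0.
by case: x => [|y]; rewrite !IH; ring.
Qed.

Lemma killed_walk_supp alive i0 mu S : (forall x, (S <= x)%N -> mu x = 0) ->
  forall k x, (S + k <= x)%N -> killed_walk alive i0 mu k x = 0.
Proof.
move=> mu_supp; elim=> [|k IH] x /=; first by rewrite addn0; apply: mu_supp.
move=> le_x; rewrite /killed_step; case: ifP => // _.
by case: x le_x => [|y] le_y; rewrite IH ?addr0 ?mul0r ?IH ?add0r ?mul0r //; lia.
Qed.

Definition delta (m y : nat) : R := (y == m)%:R.

Lemma delta_ge0 m x : 0 <= delta m x. Proof. exact: ler0n. Qed.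

Lemma sum_delta_mul m N f : (m <= N)%N -> \sum_(x < N.+1) delta m x * f x = f m.
Proof.
move=> le_mN; rewrite (bigD1 (Ordinal (_ : (m < N.+1)%N))) //= /delta eqxx mul1r.
rewrite big1 ?addr0 // => x ne_xm; rewrite (_ : (x == m :> nat) = false) ?mul0r //.
by apply/negbTE; apply: contra ne_xm => /eqP x_m; apply/eqP/val_inj.
Qed.

End KilledWalk.

Section Moments.
Variables (R : realType) (N : nat).
Implicit Types (alive : nat -> nat -> bool) (nu : nat -> R).

Definition mass nu := \sum_(x < N.+1) nu x.
Definition moment1 nu := \sum_(x < N.+1) nu x * x%:R.
Definition moment2 nu := \sum_(x < N.+1) nu x * x%:R ^+ 2.

Lemma mass_ge0 nu : (forall x, 0 <= nu x) -> 0 <= mass nu.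
Proof. by move=> nu_ge0; apply: sumr_ge0. Qed.

Lemma mass_delta m : (m <= N)%N -> mass (delta R m) = 1.
Proof.
move=> le_mN; rewrite /mass -[RHS](sum_delta_mul (fun=> 1) le_mN).
by apply: eq_bigr => x _; rewrite mulr1.
Qed.

Lemma moment1_delta m : (m <= N)%N -> moment1 (delta R m) = m%:R.
Proof. exact: (sum_delta_mul (fun x => x%:R)). Qed.

Lemma moment2_delta m : (m <= N)%N -> moment2 (delta R m) = m%:R ^+ 2.
Proof. exact: (sum_delta_mul (fun x => x%:R ^+ 2)). Qed.

Lemma le_mass nu x : (forall y, 0 <= nu y) -> (x <= N)%N -> nu x <= mass nu.
Proof.
move=> nu_ge0 le_xN; rewrite /mass (bigD1 (Ordinal (_ : (x < N.+1)%N))) //= lerDl.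
exact: sumr_ge0.
Qed.

Lemma moment1_shift nu L : \sum_(x < N.+1) nu x * (x%:R - L) = moment1 nu - L * mass nu.
Proof. by rewrite /moment1 /mass mulr_sumr -sumrB; apply: eq_bigr => x _; ring. Qed.

(* Killing only removes mass at heights below [L], so [x - L] is a
   submartingale. *)
Lemma moment1_killed_step alive i nu L :
    (forall x, ~~ alive i.+1 x -> x%:R < L) -> 0 <= L ->
    (forall x, 0 <= nu x) -> (forall x, (N <= x)%N -> nu x = 0) ->
  moment1 nu - L * mass nu <= moment1 (killed_step alive i nu) - L * mass (killed_step alive i nu).
Proof.
move=> killed_below L_ge0 nu_ge0 nu_supp; rewrite -!moment1_shift (@sum_killed_step_mul _ alive i nu (fun x => x%:R - L) N) //.
apply: ler_sum => i' _; move: (nat_of_ord i') => x; apply: ler_wpM2l => //; rewrite /dual_step /=.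
have kill y : y%:R - L <= (if alive i.+1 y then y%:R - L else 0).
  by case: ifP => // /negbT /killed_below; lra.
have := kill x.+1; case: x => [|x] /=.
  by case: ifP; rewrite ?mulr0n ?mulr1n => _; lra.
have := kill x; rewrite -[x.+2%:R]natr1 -[x.+1%:R]natr1.
by case: ifP => _; case: ifP => _; lra.
Qed.

Lemma moment2_killed_step alive i nu :
    (forall x, 0 <= nu x) -> (forall x, (N <= x)%N -> nu x = 0) ->
  moment2 (killed_step alive i nu) <= moment2 nu + mass nu.
Proof.
move=> nu_ge0 nu_supp; rewrite /moment2 /mass (@sum_killed_step_mul _ alive i nu (fun x => x%:R ^+ 2) N) //.
rewrite -big_split /=.
apply: ler_sum => i' _; move: (nat_of_ord i') => x.
rewrite -[X in _ <= _ + X]mulr1 -mulrDr.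
apply: ler_wpM2l => //; rewrite /dual_step /=.
have kill y : (if alive i.+1 y then y%:R ^+ 2 else 0) <= y%:R ^+ 2 :> R.
  by case: ifP => // _; apply: sqr_ge0.
have := kill x.+1; case: x => [|x] /=.
  by case: ifP => _; rewrite ?mulr0n ?mulr1n; nra.
have := kill x; rewrite -[x.+2%:R]natr1 -[x.+1%:R]natr1.
have sq_ge0 (y : R) : 0 <= y ^+ 2 by apply: sqr_ge0.
by case: ifP => _; case: ifP => _; nra.
Qed.

Lemma moment1_le nu t : (forall x, 0 <= nu x) -> 0 < t ->
  moment1 nu <= moment2 nu / (2 * t) + t / 2 * mass nu.
Proof.
move=> nu_ge0 t_gt0; rewrite /moment1 /moment2 /mass mulr_suml mulr_sumr -big_split /=.
apply: ler_sum => i' _; move: (nat_of_ord i') => x.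
have amgm : x%:R <= x%:R ^+ 2 / (2 * t) + t / 2 :> R.
  have -> : x%:R ^+ 2 / (2 * t) + t / 2 = x%:R + (x%:R - t) ^+ 2 / (2 * t) :> R.
    by field; rewrite gt_eqF.
  by rewrite lerDl divr_ge0 ?sqr_ge0 // mulr_ge0 // ltW.
by have := ler_wpM2l (nu_ge0 x) amgm; lra.
Qed.

End Moments.

Section Counting.
Variables (R : realType) (alpha : R).

Definition above_barrier (i x : nat) : bool := (i%:R : R) `^ alpha <= x%:R.

Definition count_good n x : R :=
  \sum_(t : n.-tuple bool) (good_event alpha t && (Zsum R t n == x%:R))%:R.

Lemma good_event_rcons n (t : n.-tuple bool) b : good_event alpha (rcons_pair (t, b)) =
  good_event alpha t && (n.+1%:R `^ alpha <= seqZ R (rcons t b) n.+1).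
Proof.
have Zlast : seqZ R (rcons t b) n.+1 = Zsum R (rcons_pair (t, b)) n.+1 by [].
have Zprefix (i : 'I_n) : Zsum R (rcons_pair (t, b)) i.+1 = Zsum R t i.+1.
  by rewrite !ZsumE /= seqZ_rcons // size_tuple.
apply/forallP/andP => [good_tb | [/forallP good_t good_last] i].
  split; last by rewrite Zlast; apply: good_tb ord_max.
  by apply/forallP => i; rewrite -Zprefix; apply: (good_tb (widen_ord (leqnSn n) i)).
case: (ltnP i n) => [lt_in | le_ni].
  by have := good_t (Ordinal lt_in); rewrite -Zprefix.
have -> : nat_of_ord i = n by have := ltn_ord i; lia.
by rewrite -Zlast.
Qed.

Lemma above_barrierS0 i : above_barrier i.+1 0 = false.
Proof. by apply/negbTE; rewrite /above_barrier -ltNge powR_gt0 // ltr0Sn. Qed.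

Lemma count_good0 x : count_good 0 x = (x == 0)%:R.
Proof.
rewrite /count_good (eq_bigr (fun _ => ((0 : R) == x%:R)%:R)); last first.
  move=> t _; have -> : good_event alpha t by apply/forallP => -[].
  by rewrite ZsumE /seqZ big_geq.
by rewrite sumr_const card_tuple card_bool expn0 mulr1n eq_sym pnatr_eq0.
Qed.

Lemma count_goodS n x : count_good n.+1 x =
  (above_barrier n.+1 x)%:R * ((if x is y.+1 then count_good n y else 0) + count_good n x.+1).
Proof.
rewrite /count_good big_tuple_rcons.
under eq_bigr => t _.
  under eq_bigr => b _ do rewrite good_event_rcons ZsumE /= (seqZ_rcons_last _ _ (size_tuple t)).
  rewrite sum_sign_step; last exact: seqY_sign.
  over.
rewrite -mulr_sumr big_split /=; case: x => [|y].
  by rewrite -/(above_barrier n.+1 0) above_barrierS0 !mul0r.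
congr (_ * (_ + _)); apply: eq_bigr => t _; rewrite ZsumE.
  by rewrite -natr1 addrK.
by rewrite natr1.
Qed.

Lemma count_good_killed n x :
  count_good n x = 2 ^+ n * killed_walk above_barrier 0 (delta R 0) n x.
Proof.
elim: n x => [|n IH] x; first by rewrite count_good0 mul1r.
rewrite count_goodS /= /killed_step add0n; case: above_barrier; last by rewrite mulr0 mul0r.
by rewrite mul1r exprS; case: x => [|y]; rewrite ?IH; field.
Qed.

Lemma good_event_Zsum n (t : n.-tuple bool) : good_event alpha t ->
  exists2 x, (x <= n)%N & Zsum R t n = x%:R.
Proof.
elim: n t => [|n IH] t; first by exists 0%N => //; rewrite ZsumE /seqZ big_geq.
have [unrcons rconsK unrconsK] := rcons_pair_bij (bool : finType) n.
rewrite -(unrconsK t); case: (unrcons t) => t' b.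
rewrite good_event_rcons => /andP[/IH[x le_xn Zx] above].
have barrier_gt0 : 0 < n.+1%:R `^ alpha :> R by rewrite powR_gt0 // ltr0Sn.
rewrite ZsumE /= (seqZ_rcons_last _ _ (size_tuple t')) -ZsumE Zx in above *.
case: (seqY_sign R t' n) => -> in above *; case: b above; rewrite /sign ?mul1r ?mulr1 ?mulrN1 ?opprK => above.
- by exists x.+1; [lia | rewrite natr1].
- case: x le_xn Zx above => [|x] le_xn Zx above; first by rewrite add0r in above; lra.
  by exists x; [lia | rewrite -natr1 addrK].
- case: x le_xn Zx above => [|x] le_xn Zx above; first by rewrite add0r in above; lra.
  by exists x; [lia | rewrite -natr1 addrK].
- by exists x.+1; [lia | rewrite natr1].
Qed.

Lemma prob_good_killed n :
  prob_good alpha n = mass n (killed_walk above_barrier 0 (delta R 0) n).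
Proof.
rewrite /prob_good /mass.
suff -> : #|[set t : n.-tuple bool | good_event alpha t]|%:R = \sum_(x < n.+1) count_good n x.
  under eq_bigr => x _ do rewrite count_good_killed.
  by rewrite -mulr_sumr mulrC mulKf // expf_neq0 // pnatr_eq0.
rewrite /count_good exchange_big /= -sum1_card natr_sum big_mkcond /=.
apply: eq_bigr => t _; rewrite inE; case: (boolP (good_event alpha t)) => [good|_]; last first.
  by rewrite big1.
have [x le_xn ->] := good_event_Zsum good.
rewrite (bigD1 (Ordinal (le_xn : (x < n.+1)%N))) //= eqxx big1 ?addr0 // => i ne_ix.
rewrite eqr_nat (_ : (x == i :> nat) = false) //.
by apply/negbTE; apply: contra ne_ix => /eqP x_i; apply/eqP/val_inj; rewrite /= -x_i.
Qed.

End Counting.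

Section Survival.
Variable R : realType.

Definition positive (i x : nat) : bool := (0 < x)%N.
Definition surv k x : R := (nsurv k x)%:R / 2 ^+ k.

Lemma killed_walk_positive0 i0 (nu : nat -> R) k : nu 0%N = 0 ->
  killed_walk positive i0 nu k 0%N = 0.
Proof. by case: k. Qed.

Lemma dual_step_surv i l x : (0 < x)%N -> dual_step positive i (surv l) x = surv l.+1 x.
Proof.
move=> x_gt0; rewrite /dual_step /positive /surv nsurvS // natrD exprS.
have two_pow_neq0 : 2 ^+ l != 0 :> R by rewrite expf_neq0 // pnatr_eq0.
by case: x x_gt0 => [|[|x]] //= _; rewrite ?nsurvn0 /=; field.
Qed.

Lemma sum_killed_walk_surv i0 nu S N k l :
    (forall x, (S <= x)%N -> nu x = 0) -> nu 0%N = 0 -> (S + k <= N.+1)%N ->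
  \sum_(x < N.+1) killed_walk positive i0 nu k x * surv l x
  = \sum_(x < N.+1) nu x * surv (l + k) x.
Proof.
move=> nu_supp nu0; elim: k l => [|k IH] l le_SkN; first by rewrite addn0.
rewrite /= sum_killed_step_mul; last by move=> x le_Nx; apply: killed_walk_supp nu_supp _ _ _; lia.
rewrite -addSnnS -IH; last lia.
apply: eq_bigr => x _; case: (posnP x) => [->|x_gt0].
  by rewrite killed_walk_positive0 // !mul0r.
by rewrite dual_step_surv.
Qed.

Lemma mass_killed_walk_positive i0 m k N : (0 < m)%N -> (m + k <= N)%N ->
  mass N (killed_walk positive i0 (delta R m) k) = surv k m.
Proof.
move=> m_gt0 le_mkN; rewrite /mass.
have delta_supp x : (m.+1 <= x)%N -> delta R m x = 0.
  by move=> lt_mx; rewrite /delta (_ : (x == m) = false) //; apply/negbTE; lia.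
have delta_at0 : delta R m 0 = 0 by rewrite /delta eq_sym (negbTE (lt0n_neq0 m_gt0)).
transitivity (\sum_(x < N.+1) killed_walk positive i0 (delta R m) k x * surv 0 x).
  apply: eq_bigr => x _; case: (posnP x) => [->|x_gt0].
    by rewrite killed_walk_positive0 ?mul0r.
  by rewrite /surv nsurv0n x_gt0 expr0 divr1 mulr1.
rewrite (sum_killed_walk_surv _ _ delta_supp delta_at0); last lia.
by rewrite sum_delta_mul //; lia.
Qed.

Lemma surv_sq_le k m : surv k m ^+ 2 * k.+1%:R <= 8 * m%:R ^+ 2.
Proof.
have nat_bound : (nsurv k m ^ 2 * k.+1 <= 8 * m ^ 2 * 4 ^ k)%N.
  apply: (@leq_trans ((2 * m * 'C(k, k./2)) ^ 2 * k.+1)).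
    by rewrite leq_mul2r leq_exp2r // nsurv_le orbT.
  have := bin_sq_le k k./2; nia.
rewrite /surv expr_div_n mulrAC ler_pdivrMr ?exprn_gt0 //.
rewrite -exprM mulnC exprM (_ : (2 : R) ^+ 2 = 4%:R); last by rewrite expr2 -natrM.
by rewrite -!natrX -!natrM ler_nat.
Qed.

End Survival.

Lemma above_barrier_positive (R : realType) (alpha : R) i x :
  above_barrier alpha i.+1 x -> positive i.+1 x.
Proof. by rewrite /positive lt0n; apply: contraTN => /eqP->; rewrite above_barrierS0. Qed.

Lemma prob_good_sq_le (R : realType) (alpha : R) n : (0 < n)%N -> prob_good alpha n ^+ 2 * n%:R <= 2.
Proof.
case: n => [//|n] _; rewrite prob_good_killed.
have first_step x : killed_walk positive 0 (delta R 0) n.+1 x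
                    = 2^-1 * killed_walk positive 1 (delta R 1) n x.
  rewrite -(add1n n) killed_walkD -killed_walkZ; apply: eq_killed_walk => -[|[|y]] /=;
  by rewrite /killed_step /delta /=; lra.
set P := mass _ _.
have P_ge0 : 0 <= P by apply: mass_ge0 => x; apply: killed_walk_ge0 (@delta_ge0 R 0) _ _.
have le_half_surv : P <= 2^-1 * surv R n 1.
  rewrite -(mass_killed_walk_positive _ 1 (isT : (0 < 1)%N) (leqnn n.+1)) /mass mulr_sumr.
  apply: ler_sum => x _; rewrite -first_step.
  by apply: (killed_walk_le _ (@above_barrier_positive _ alpha) (@delta_ge0 R 0)) => y.
have surv_sq := surv_sq_le R n 1; rewrite expr1n mulr1 in surv_sq.
have P_sq : P ^+ 2 <= (2^-1 * surv R n 1) ^+ 2 by rewrite ler_sqr ?nnegrE //; lra.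
have n_ge0 : 0 <= n.+1%:R :> R by [].
by rewrite exprMn in P_sq; nra.
Qed.

Section RealBounds.
Variable R : realType.

Lemma sum_inv_sqrt_le K : \sum_(k < K) (Num.sqrt k.+1%:R : R)^-1 <= 2 * Num.sqrt K%:R.
Proof.
elim: K => [|K IH]; first by rewrite big_ord0 sqrtr0 mulr0.
rewrite big_ord_recr /=.
set a := Num.sqrt (K%:R : R) in IH *; set b := Num.sqrt (K.+1%:R : R).
have a_ge0 : 0 <= a by apply: sqrtr_ge0.
have b_gt0 : 0 < b by rewrite sqrtr_gt0 ltr0Sn.
have a_sq : a ^+ 2 = K%:R by rewrite sqr_sqrtr // ler0n.
have b_sq : b ^+ 2 = K%:R + 1 by rewrite sqr_sqrtr ?ler0n // natr1.
suff : b^-1 <= 2 * b - 2 * a by lra.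
rewrite -[b^-1]mul1r ler_pdivrMr // mulrBl.
have : 2 * a * b <= a ^+ 2 + b ^+ 2 by have := sqr_ge0 (a - b); lra.
nra.
Qed.

Lemma sum_geometric_le (r : R) j0 d : 0 < r < 1 ->
  \sum_(i < d) r ^+ (j0 + i) <= r ^+ j0 / (1 - r).
Proof.
move=> /andP[r_gt0 r_lt1]; under eq_bigr do rewrite exprD.
have := geometric_le_lim d (exprn_ge0 j0 (ltW r_gt0)) r_gt0; rewrite gtr0_norm // => /(_ r_lt1).
by rewrite seriesEnat /= big_mkord.
Qed.

Lemma exists_expr_le (r eps : R) : 0 <= r < 1 -> 0 < eps -> exists j : nat, r ^+ j <= eps.
Proof.
move=> /andP[r_ge0 r_lt1] eps_gt0.
have r_norm_lt1 : `|r| < 1 by rewrite ger0_norm.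
have [j _ small] := cvgr0_norm_le _ (cvg_expr r_norm_lt1) _ eps_gt0.
by exists j; have := small j (leqnn j); rewrite /= ger0_norm // exprn_ge0.
Qed.

Lemma powR_le_expr (b : R) i j : 0 <= b -> (i <= 2 ^ j)%N -> i%:R `^ b <= (2 `^ b) ^+ j.
Proof.
move=> b_ge0 le_i2j; apply: (@le_trans _ _ ((2 ^ j)%N%:R `^ b)).
  by apply: ge0_ler_powR; rewrite ?nnegrE ?ler0n // ler_nat.
by rewrite natrX -powR_mulrn ?ler0n // -powRrM mulrC powRrM powR_mulrn.
Qed.

Lemma two_powR_sq_lt (b : R) : b < 2^-1 -> (2 `^ b) ^+ 2 < 2.
Proof.
move=> b_lt_half; rewrite -powR_mulrn ?powR_ge0 // -powRrM.
rewrite -[X in _ < X]powRr1 ?ler0n // /powR pnatr_eq0 /= ltr_expR.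
by rewrite ltr_pM2r ?ln_gt0 ?ltr1n //; lra.
Qed.

End RealBounds.

Section LowerBound.
Variables (R : realType) (beta : R) (j0 n : nat).
Hypotheses (beta_gt0 : 0 < beta) (beta_lt_half : beta < 2^-1) (le_mn : (2 ^ j0 <= n)%N).

Let m := (2 ^ j0)%N.
Let K := (n - m)%N.
Let mu k := killed_walk (above_barrier beta) m (delta R m) k.
Let A k := mass n (mu k).
Let E k := moment1 n (mu k).
Let F k := moment2 n (mu k).
Let W L k := E k - L * A k.
Let rho : R := 2 `^ beta.
Let s2 : R := Num.sqrt 2.
Let r := rho / s2.

(* Large enough [j0] make the initial level [rho ^+ (j0 + 1)] and the total
   cost of all the level changes in [W_dyadic] at most [m / 4] each. *)
Hypothesis small_start : r ^+ j0 <= (1 - r) / (8 * s2 * rho ^+ 2).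

Lemma m_gt0 : (0 < m)%N. Proof. by rewrite expn_gt0. Qed.
Lemma s2_gt0 : 0 < s2. Proof. by rewrite sqrtr_gt0. Qed.
Lemma s2_sq : s2 ^+ 2 = 2. Proof. by rewrite sqr_sqrtr. Qed.
Lemma s2_ge1 : 1 <= s2. Proof. by rewrite -sqrtr1 ler_sqrt // ler1n. Qed.
Lemma s2_le2 : s2 <= 2.
Proof. by rewrite -ler_sqr ?nnegrE ?(ltW s2_gt0) // s2_sq expr2; lra. Qed.
Lemma rho_ge1 : 1 <= rho.
Proof. by rewrite -(powRr0 2) ler_powR ?ler1n // ltW. Qed.
Lemma rho_ge0 : 0 <= rho. Proof. exact: powR_ge0. Qed.
Lemma ratio_gt0 : 0 < r. Proof. by rewrite divr_gt0 ?s2_gt0 ?powR_gt0. Qed.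

Lemma ratio_lt1 : r < 1.
Proof.
rewrite ltr_pdivrMr ?s2_gt0 // mul1r -ltr_sqr ?nnegrE ?powR_ge0 ?(ltW s2_gt0) //.
by rewrite s2_sq two_powR_sq_lt.
Qed.

Lemma rho_exprE e : rho ^+ e = r ^+ e * s2 ^+ e.
Proof. by rewrite -exprMn divfK // gt_eqF ?s2_gt0. Qed.

Lemma mu_ge0 k x : 0 <= mu k x.
Proof. exact: killed_walk_ge0 (@delta_ge0 R m) _ _. Qed.

Lemma mu_supp k x : (m + k < x)%N -> mu k x = 0.
Proof.
move=> lt_mkx; apply: (@killed_walk_supp R _ _ _ m.+1) => [y lt_my|]; last lia.
by rewrite /delta (_ : (y == m) = false) //; apply/negbTE; lia.
Qed.

Lemma A_ge0 k : 0 <= A k. Proof. by apply: mass_ge0 => x; apply: mu_ge0. Qed.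

Lemma A_sqrt_le k : (k <= K)%N -> A k * Num.sqrt k.+1%:R <= 2 * s2 * m%:R.
Proof.
move=> le_kK.
have A_le_surv : A k <= surv R k m.
  rewrite -(mass_killed_walk_positive _ m m_gt0 (_ : (m + k <= n)%N)); last lia.
  apply: ler_sum => x _.
  exact: (killed_walk_le _ (@above_barrier_positive _ beta) (@delta_ge0 R m)).
have lhs_ge0 : 0 <= A k * Num.sqrt k.+1%:R by rewrite mulr_ge0 ?A_ge0 ?sqrtr_ge0.
have rhs_ge0 : 0 <= 2 * s2 * m%:R by rewrite !mulr_ge0 ?ler0n ?(ltW s2_gt0).
rewrite -ler_sqr ?nnegrE // !exprMn s2_sq sqr_sqrtr ?ler0n //.
apply: (@le_trans _ _ (surv R k m ^+ 2 * k.+1%:R)).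
  by rewrite ler_wpM2r ?ler0n // ler_sqr ?nnegrE // (le_trans (A_ge0 k)).
by apply: le_trans (surv_sq_le R k m) _; rewrite expr2; lra.
Qed.

Lemma W_mono L k1 k2 : (k1 <= k2 <= K)%N -> 0 <= L ->
    (forall k, (k1 <= k < k2)%N -> (m + k).+1%:R `^ beta <= L) ->
  W L k1 <= W L k2.
Proof.
elim: k2 => [|k2 IH] /andP[le_k12 le_k2K] L_ge0 barrier_le.
  by rewrite (_ : k1 = 0%N) //; lia.
case: (leqP k1 k2) => [le_k1k2|]; last by move=> lt; rewrite (_ : k1 = k2.+1) //; lia.
apply: le_trans (IH _ L_ge0 _) _; first lia.
  by move=> k /andP[? ?]; apply: barrier_le; lia.
rewrite /W /E /A /mu /=; apply: moment1_killed_step => // [x|x|x le_nx].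
- rewrite /above_barrier -ltNge => below; apply: lt_le_trans below (barrier_le k2 _); lia.
- exact: mu_ge0.
- by apply: mu_supp; lia.
Qed.

Lemma F_le k : (k <= K)%N -> F k <= m%:R ^+ 2 + \sum_(i < k) A i.
Proof.
elim: k => [|k IH] le_kK; first by rewrite big_ord0 addr0 /F /mu /= moment2_delta.
rewrite big_ord_recr /= addrA; apply: (@le_trans _ _ (F k + A k)).
  rewrite /F /A /mu /=; apply: moment2_killed_step => [x|x le_nx]; first exact: mu_ge0.
  by apply: mu_supp; lia.
by rewrite lerD2r IH //; lia.
Qed.

Lemma level_cost_le i : (2 ^ (j0 + i + 1) <= n)%N ->
  rho ^+ (j0 + i + 2) * A (2 ^ (j0 + i + 1) - m)%N <= 2 * s2 * rho ^+ 2 * m%:R * r ^+ (j0 + i).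
Proof.
move=> le_n; set e := (j0 + i)%N; set k := (2 ^ (e + 1) - m)%N.
have le_kK : (k <= K)%N by rewrite /k /K leq_sub2r.
have s2e_le : s2 ^+ e <= Num.sqrt k.+1%:R.
  rewrite -ler_sqr ?nnegrE ?exprn_ge0 ?sqrtr_ge0 ?(ltW s2_gt0) //.
  rewrite -exprM mulnC exprM s2_sq sqr_sqrtr // -natrX ler_nat.
  have : (m <= 2 ^ e)%N by rewrite leq_exp2l // /e; lia.
  by rewrite /k addn1 expnS; lia.
have A_s2e : A k * s2 ^+ e <= 2 * s2 * m%:R.
  by apply: le_trans (A_sqrt_le le_kK); rewrite ler_wpM2l ?A_ge0.
have rest_ge0 : 0 <= r ^+ e * rho ^+ 2 by rewrite mulr_ge0 ?exprn_ge0 ?powR_ge0 ?(ltW ratio_gt0).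
by rewrite exprD rho_exprE; have := ler_wpM2l rest_ge0 A_s2e; lra.
Qed.

Lemma barrier_le e k : ((m + k).+1 <= 2 ^ e)%N -> (m + k).+1%:R `^ beta <= rho ^+ e.
Proof. exact/powR_le_expr/ltW. Qed.

(* On the times [2 ^ (j0 + d) <= m + k <= 2 ^ (j0 + d + 1)] the barrier stays
   below [rho ^+ (j0 + d + 1)]; moving to the next block raises the level [L]
   of [W] by a factor [rho], which costs [level_cost_le]. *)
Lemma W_dyadic d k : (k <= K)%N -> (2 ^ (j0 + d) <= m + k <= 2 ^ (j0 + d + 1))%N ->
  m%:R - rho ^+ (j0 + 1) - \sum_(i < d) 2 * s2 * rho ^+ 2 * m%:R * r ^+ (j0 + i)
  <= W (rho ^+ (j0 + d + 1)) k.
Proof.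
have rho_expr_ge0 e : 0 <= rho ^+ e by rewrite exprn_ge0 ?powR_ge0.
elim: d k => [|d IH] k le_kK /andP[lo hi].
  have -> : m%:R - rho ^+ (j0 + 1) = W (rho ^+ (j0 + 1)) 0.
    by rewrite /W /E /A /mu /= moment1_delta ?mass_delta ?mulr1.
  rewrite big_ord0 subr0 addn0.
  apply: W_mono; [by rewrite le_kK | exact: rho_expr_ge0 | move=> k' /andP[_ lt_k'k]].
  by apply: barrier_le; rewrite addn0 in hi; lia.
have le_mn' : (m <= n)%N by [].
have le_m2 : (m <= 2 ^ (j0 + d))%N by rewrite leq_exp2l //; lia.
have e1 : (2 ^ (j0 + d + 1) = 2 * 2 ^ (j0 + d))%N by rewrite addn1 expnS.
have e2 : (2 ^ (j0 + d.+1) = 2 ^ (j0 + d + 1))%N by rewrite addnS addn1.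
have e3 : (2 ^ (j0 + d.+1 + 1) = 2 * 2 ^ (j0 + d + 1))%N.
  by rewrite [in LHS]addn1 expnS addnS addn1.
rewrite (_ : (j0 + d.+1 + 1 = j0 + d + 2)%N); last lia.
set k1 := (2 ^ (j0 + d + 1) - m)%N.
have le_k1k : (k1 <= k)%N by rewrite /k1; lia.
have W_k1 := IH k1 (leq_trans le_k1k le_kK) ltac:(rewrite /k1; apply/andP; split; lia).
have bonus := @level_cost_le d ltac:(rewrite /K in le_kK; lia).
have W_mono_k1 : W (rho ^+ (j0 + d + 2)) k1 <= W (rho ^+ (j0 + d + 2)) k.
  apply: W_mono; [by rewrite le_k1k | exact: rho_expr_ge0 | move=> k' /andP[_ lt_k'k]].
  by apply: barrier_le; rewrite (_ : (j0 + d + 2 = (j0 + d + 1).+1)%N) ?expnS; lia.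
have := mulr_ge0 (rho_expr_ge0 (j0 + d + 1)%N) (A_ge0 k1).
rewrite big_ord_recr /= /W in W_k1 W_mono_k1 *; lra.
Qed.

Lemma rho_r_expr_le : rho * r ^+ j0 <= 4^-1.
Proof.
have den_gt0 : 0 < 8 * s2 * rho ^+ 2 by rewrite !mulr_gt0 ?exprn_gt0 ?powR_gt0 ?s2_gt0.
have := small_start; rewrite ler_pdivlMr // => small.
have s2_sub1 : 0 <= s2 - 1 by rewrite subr_ge0 s2_ge1.
have rho_sub1 : 0 <= rho - 1 by rewrite subr_ge0 rho_ge1.
have := mulr_ge0 s2_sub1 (mulr_ge0 (exprn_ge0 j0 (ltW ratio_gt0)) (exprn_ge0 2 rho_ge0)).
have := mulr_ge0 rho_sub1 (mulr_ge0 rho_ge0 (exprn_ge0 j0 (ltW ratio_gt0))).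
have := ratio_gt0; lra.
Qed.

Lemma rho_expr_start_le : rho ^+ (j0 + 1) <= m%:R / 4.
Proof.
have s2_expr_le : s2 ^+ j0 <= m%:R.
  by rewrite natrX; apply: lerXn2r; rewrite ?nnegrE ?(ltW s2_gt0) ?s2_le2.
rewrite addn1 exprS rho_exprE mulrA.
have := ler_wpM2l (mulr_ge0 rho_ge0 (exprn_ge0 j0 (ltW ratio_gt0))) s2_expr_le.
have := ler_wpM2r (ler0n R m) rho_r_expr_le; lra.
Qed.

Lemma sum_level_cost_le d : \sum_(i < d) 2 * s2 * rho ^+ 2 * m%:R * r ^+ (j0 + i) <= m%:R / 4.
Proof.
have den_gt0 : 0 < 8 * s2 * rho ^+ 2 by rewrite !mulr_gt0 ?exprn_gt0 ?powR_gt0 ?s2_gt0.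
have c_ge0 : 0 <= 2 * s2 * rho ^+ 2 * m%:R.
  by rewrite !mulr_ge0 ?ler0n ?exprn_ge0 ?powR_ge0 ?(ltW s2_gt0).
have frac_le : r ^+ j0 / (1 - r) <= (8 * s2 * rho ^+ 2)^-1.
  by rewrite ler_pdivrMr ?subr_gt0 ?ratio_lt1 // mulrC.
rewrite -mulr_sumr; apply: le_trans (ler_wpM2l c_ge0 (sum_geometric_le _ _ _)) _.
  by rewrite ratio_gt0 ratio_lt1.
apply: le_trans (ler_wpM2l c_ge0 frac_le) _.
rewrite le_eqVlt; apply/orP; left; apply/eqP; field.
by rewrite gt_eqF ?powR_gt0 ?gt_eqF ?s2_gt0.
Qed.

Lemma E_K_ge : m%:R / 2 <= E K.
Proof.
have n_gt0 : (0 < n)%N by apply: leq_trans m_gt0 le_mn.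
set J := trunc_log 2 n.
have J_lo : (2 ^ J <= n)%N by apply: trunc_logP.
have J_hi : (n <= 2 ^ J.+1)%N by apply/ltnW/trunc_log_ltn.
have j0_le_J : (j0 <= J)%N by apply: trunc_log_max.
have := @W_dyadic (J - j0) K (leqnn K).
rewrite subnKC // (_ : (m + K = n)%N) ?subnKC // addn1 J_lo J_hi => /(_ isT) W_K.
have := mulr_ge0 (exprn_ge0 J.+1 rho_ge0) (A_ge0 K).
have := rho_expr_start_le; have := sum_level_cost_le (J - j0).
by rewrite /W in W_K; lra.
Qed.

Lemma A_K_ge : m%:R / 4 <= A K * (m%:R + 4 * s2 * Num.sqrt K%:R).
Proof.
set q := Num.sqrt (K%:R : R); set t := 2 * (m%:R + 4 * s2 * q).
have q_ge0 : 0 <= q by apply: sqrtr_ge0.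
have s2q_ge0 : 0 <= s2 * q by rewrite mulr_ge0 ?(ltW s2_gt0).
have m_pos : 0 < m%:R :> R by rewrite ltr0n m_gt0.
have t_gt0 : 0 < t by rewrite /t; lra.
have sum_A_le : \sum_(i < K) A i <= 4 * s2 * m%:R * q.
  apply: (@le_trans _ _ (\sum_(i < K) 2 * s2 * m%:R * (Num.sqrt i.+1%:R)^-1)).
    apply: ler_sum => i _; rewrite ler_pdivlMr ?sqrtr_gt0 ?ltr0Sn //.
    by apply: A_sqrt_le; apply: ltnW.
  rewrite -mulr_sumr; have := sum_inv_sqrt_le R K.
  have c_ge0 : 0 <= 2 * s2 * m%:R by rewrite !mulr_ge0 ?ler0n ?(ltW s2_gt0).
  by move/(ler_wpM2l c_ge0); rewrite /q; lra.
have F_K : F K / (2 * t) <= m%:R / 4.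
  have two_t_gt0 : 0 < 2 * t by rewrite mulr_gt0.
  rewrite ler_pdivrMr //; apply: (le_trans (F_le (leqnn K))).
  by rewrite /t; nra.
have := moment1_le n (mu_ge0 K) t_gt0; have := E_K_ge.
by rewrite /E /F /A /t in F_K *; lra.
Qed.

Lemma A_K_ge_sqrt : m%:R / (4 * (m%:R + 4 * s2)) / Num.sqrt n%:R <= A K.
Proof.
have n_gt0 : (0 < n)%N by apply: leq_trans m_gt0 le_mn.
have sqrt_n_ge1 : 1 <= Num.sqrt n%:R :> R by rewrite -[X in X <= _]sqrtr1 ler_sqrt ?ler1n.
have sqrt_K_le : Num.sqrt K%:R <= Num.sqrt n%:R :> R by rewrite ler_sqrt ?ler_nat ?leq_subr.
have m_pos : 0 < m%:R :> R by rewrite ltr0n m_gt0.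
have s2_pos := s2_gt0.
have K_le_n : m%:R + 4 * s2 * Num.sqrt K%:R <= (m%:R + 4 * s2) * Num.sqrt n%:R by nra.
rewrite -mulrA -invfM ler_pdivrMr; last by rewrite !mulr_gt0 //; lra.
by have := ler_wpM2l (A_ge0 K) K_le_n; have := A_K_ge; lra.
Qed.

End LowerBound.

Section Restart.
Variables (R : realType) (alive : nat -> nat -> bool).
Hypothesis alive_diag : forall i, alive i.+1 i.+1.

Lemma killed_walk_diag k : (2 ^+ k)^-1 <= killed_walk alive 0 (delta R 0) k k.
Proof.
elim: k => [|k IH] /=; first by rewrite expr0 invr1 /delta eqxx.
rewrite /killed_step add0n alive_diag exprS invfM.
have := killed_walk_ge0 alive 0 (@delta_ge0 R 0) k k.+2.
have : 2^-1 * (2 ^+ k)^-1 <= 2^-1 * killed_walk alive 0 (delta R 0) k k.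
  by rewrite ler_pM2l ?invr_gt0.
lra.
Qed.

Lemma killed_walk_restart m n : (m <= n)%N ->
  (2 ^+ m)^-1 * mass n (killed_walk alive m (delta R m) (n - m))
  <= mass n (killed_walk alive 0 (delta R 0) n).
Proof.
move=> le_mn; rewrite /mass mulr_sumr; apply: ler_sum => i _; move: (nat_of_ord i) => x.
have -> : killed_walk alive 0 (delta R 0) n x
          = killed_walk alive m (killed_walk alive 0 (delta R 0) m) (n - m) x.
  by rewrite -{1}(subnKC le_mn) killed_walkD.
rewrite -killed_walkZ.
apply: killed_walk_le => // [y|y]; first by rewrite mulr_ge0 ?invr_ge0 ?exprn_ge0 ?delta_ge0.
rewrite /delta; case: eqP => [->|_]; first by rewrite mulr1 killed_walk_diag.
by rewrite mulr0 killed_walk_ge0 // => z; apply: delta_ge0.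
Qed.

End Restart.

Lemma above_barrier_diag (R : realType) (beta : R) i : beta <= 1 -> above_barrier beta i.+1 i.+1.
Proof. by move=> le_beta1; apply: ler1_powR; rewrite ?ler1n. Qed.

Lemma prob_good_le_exponent (R : realType) (alpha beta : R) n :
  alpha <= beta -> prob_good beta n <= prob_good alpha n.
Proof.
move=> le_ab; rewrite /prob_good ler_pM2r ?invr_gt0 ?exprn_gt0 // ler_nat.
apply: subset_leq_card; apply/fintype.subsetP => t; rewrite !inE => /forallP good_beta.
by apply/forallP => i; apply: le_trans (good_beta i); apply: ler_powR; rewrite ?ler1n.
Qed.

Lemma prob_good_upper (R : realType) (alpha : R) n : (0 < n)%N ->
  prob_good alpha n <= Num.sqrt 2 / Num.sqrt n%:R.
Proof.
move=> n_gt0; have sqrt_n_gt0 : 0 < Num.sqrt n%:R :> R by rewrite sqrtr_gt0 ltr0n.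
have prob_ge0 : 0 <= prob_good alpha n by rewrite divr_ge0 ?exprn_ge0.
rewrite ler_pdivlMr // -ler_sqr ?nnegrE ?mulr_ge0 ?sqrtr_ge0 //.
by rewrite exprMn !sqr_sqrtr ?ler0n //; apply: prob_good_sq_le.
Qed.

Lemma prob_good_ge_inv_exp2 (R : realType) (beta : R) n : beta <= 1 ->
  (2 ^+ n)^-1 <= prob_good beta n.
Proof.
move=> le_beta1; rewrite prob_good_killed.
apply: le_trans (killed_walk_diag _ (fun i => above_barrier_diag i le_beta1) n) _.
by apply: (le_mass (fun y => killed_walk_ge0 _ _ (@delta_ge0 R 0) n y)).
Qed.

Lemma prob_good_lower_pos (R : realType) (beta : R) : 0 < beta -> beta < 2^-1 ->
  exists2 c : R, 0 < c & forall n, (0 < n)%N -> c / Num.sqrt n%:R <= prob_good beta n.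
Proof.
move=> beta_gt0 beta_lt_half; have beta_le1 : beta <= 1 by lra.
set rho : R := 2 `^ beta; set s2 : R := Num.sqrt 2; set r := rho / s2.
have r_lt1 : r < 1 := ratio_lt1 beta_lt_half.
have r_gt0 : 0 < r := ratio_gt0 beta.
have s2_pos : 0 < s2 by rewrite sqrtr_gt0.
have eps_gt0 : 0 < (1 - r) / (8 * s2 * rho ^+ 2).
  by rewrite divr_gt0 ?subr_gt0 // !mulr_gt0 ?exprn_gt0 ?powR_gt0.
have r_range : 0 <= r < 1 by rewrite r_lt1 ltW.
have [j0 small_start] := exists_expr_le r_range eps_gt0.
set m := (2 ^ j0)%N; set f : R := m%:R / (4 * (m%:R + 4 * s2)).
have m_pos : 0 < m%:R :> R by rewrite ltr0n expn_gt0.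
have f_gt0 : 0 < f by rewrite divr_gt0 // mulr_gt0 // addr_gt0 // mulr_gt0.
have f_le1 : f <= 1 by rewrite ler_pdivrMr ?mulr_gt0 ?addr_gt0 ?mulr_gt0 //; lra.
have inv_pos k : 0 < (2 ^+ k)^-1 :> R by rewrite invr_gt0 exprn_gt0.
exists ((2 ^+ m)^-1 * f); first exact: mulr_gt0.
move=> n n_gt0; have sqrt_n_ge1 : 1 <= Num.sqrt n%:R :> R.
  by rewrite -[X in X <= _]sqrtr1 ler_sqrt ?ler1n.
case: (ltnP n m) => [lt_nm | le_mn].
  apply: le_trans (prob_good_ge_inv_exp2 n beta_le1).
  have : (2 ^+ m)^-1 <= (2 ^+ n)^-1 :> R.
    by rewrite lef_pV2 ?posrE ?exprn_gt0 //; apply: ler_weXn2l; rewrite ?ler1n // ltnW.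
  rewrite ler_pdivrMr ?(lt_le_trans ltr01) //.
  have := inv_pos m; nra.
rewrite -mulrA prob_good_killed.
apply: le_trans (killed_walk_restart R (fun i => above_barrier_diag i beta_le1) le_mn).
by rewrite ler_pM2l // A_K_ge_sqrt.
Qed.

Lemma prob_good_lower (R : realType) (alpha : R) : alpha < 2^-1 ->
  exists2 c : R, 0 < c & forall n, (0 < n)%N -> c / Num.sqrt n%:R <= prob_good alpha n.
Proof.
move=> alpha_lt_half; pose beta := Order.max alpha 4^-1.
have beta_gt0 : 0 < beta by rewrite lt_max invr_gt0 ltr0n orbT.
have beta_lt_half : beta < 2^-1 by rewrite gt_max alpha_lt_half /=; lra.
have [c c_gt0 lower] := prob_good_lower_pos beta_gt0 beta_lt_half.
exists c => // n n_gt0; apply: le_trans (lower n n_gt0) (prob_good_le_exponent _ _).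
by rewrite le_max lexx.
Qed.

Unset Implicit Arguments.

Theorem lemma13 (R : realType) (alpha : R) (halpha : alpha < 2^-1) :
  exists c C : R, 0 < c /\ c <= C /\
    forall n : nat, (1 <= n)%N ->
      c * n%:R `^ (- 2^-1) <= prob_good alpha n /\
      prob_good alpha n <= C * n%:R `^ (- 2^-1).
Proof.
have [c c_gt0 lower] := prob_good_lower halpha.
exists c, (Order.max c (Num.sqrt 2)); split => //; split; first by rewrite le_max lexx.
move=> n n_ge1; rewrite powRN powR12_sqrt ?ler0n //; split; first exact: lower.
apply: le_trans (prob_good_upper alpha n_ge1) _.
by rewrite ler_wpM2r ?invr_ge0 ?sqrtr_ge0 // le_max lexx orbT.
Qed.
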